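(* There is an injective ring homomorphism $\Delta\colon\Lambda\to\Gamma$ such that the ring embeddings $K\to\Lambda$ and $\Lambda\to\Gamma$ compose to the ring embedding $K\to\Gamma$.
   Context: $K$ is a division ring, $(Q,Z)$ a gentle pair (locally gentle with finitely many admissible paths), $\boldsymbol{\sigma}\colon Q_1\to\operatorname{Aut}(K)$, $a\mapsto\sigma_a$. The semilinear path algebra $K_{\boldsymbol{\sigma}}Q$ is the $K$-ring generated by trivial paths $e_v$ and arrows $a$ subject to $\sum e_v=1$, $e_v^2=e_v$, $e_ue_v=0$ ($u\neq v$), $e_v\lambda=\lambda e_v$, $e_{h(a)}a=a=ae_{t(a)}$, $a\lambda=\sigma_a(\lambda)a$. Let $\Lambda=K_{\boldsymbol{\sigma}}Q/\langle Z\rangle$. Let $Q'=Q^{\mathrm{cut}}(Z)$ be the Zembyk excision (denoted in the paper by $Q$ with a scissors superscript): vertices $v'$ for non-relational $v$ and two distinct vertices $v(\sharp),v(\flat)$ for each relational $v$ (i.e. $v=t(b)=h(a)$ for some $ba\in Z$), arrows $a'$ for $a\in Q_1$, with heads/tails reattached at relational $v$ so that for $h(a)=v=t(b)$, $b'a'$ is a path in $Q'$ exactly when $ba\notin Z$. Let $\Gamma=K_{\boldsymbol{\sigma}'}Q'$ with $\sigma'_{a'}=\sigma_a$. (The map is induced by $e_v\mapsto e_{v'}$ for non-relational $v$, $e_u\mapsto e_{u(\sharp)}+e_{u(\flat)}$ for relational $u$, $a\mapsto a'$.) *)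

From HB Require Import structures.
From mathcomp Require Import all_boot all_order all_algebra.
Set Implicit Arguments. Unset Strict Implicit. Unset Printing Implicit Defensive.
Import GRing.Theory.
Local Open Scope ring_scope.

(* A (finite) quiver is given by finite types V (vertices), A (arrows) and
   head/tail maps hd tl : A -> V; an arrow a goes from tl a to hd a.
   A path of length two "b a" (first a, then b) is composable iff hd a = tl b.
   The relation set Z is a boolean relation on arrows: Z b a means ba \in Z. *)

Definition is_division_ring (K : unitRingType) : Prop :=
  forall x : K, x != 0 -> x \is a GRing.unit.

Definition is_ring_aut (K : unitRingType) (s : {rmorphism K -> K}) : Prop :=
  bijective s.

Section Gentle.
Variables (V A : finType) (hd tl : A -> V) (Z : rel A).

(* Admissible (nontrivial) paths, written in traversal order [:: a1; a2; ...; an]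
   (a1 first): consecutive arrows are composable and no length-two subpath lies in Z. *)
Definition admissible_path (p : seq A) : bool :=
  sorted (fun a b => (hd a == tl b) && ~~ Z b a) p.

Definition locally_gentle : Prop :=
  [/\
      forall b a, Z b a -> hd a = tl b,
      forall v, #|[pred a | hd a == v]| <= 2 /\ #|[pred a | tl a == v]| <= 2,
      forall a, #|[pred b | (tl b == hd a) && Z b a]| <= 1 /\
                #|[pred b | (tl b == hd a) && ~~ Z b a]| <= 1
    &
      forall b, #|[pred a | (hd a == tl b) && Z b a]| <= 1 /\
                #|[pred a | (hd a == tl b) && ~~ Z b a]| <= 1 ]%N.

(* Gentle pair: locally gentle with finitely many admissible paths
   (trivial paths are finitely many since V is finite). *)
Definition gentle_pair : Prop :=
  locally_gentle /\
  exists s : seq (seq A), forall p, admissible_path p -> p \in s.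

Definition relational (v : V) : bool :=
  [exists b, exists a, [&& Z b a, tl b == v & hd a == v]].

(** Vertices of the Zembyk excision: (v, false) for every v ("v'" if v is
    non-relational, "v(flat)" if relational), and (v, true) ("v(sharp)")
    for relational v only. *)
Definition cut_vertex := {x : V * bool | x.2 ==> relational x.1}.

(** hd', tl' : A -> cut_vertex define the Zembyk excision Q^cut(Z) (with arrow
    set A, arrow a' being a): heads/tails lie over the original ones, and for
    h(a) = v = t(b), b'a' is a path in Q' exactly when ba is not in Z. *)
Definition zembyk_excision (hd' tl' : A -> cut_vertex) : Prop :=
  [/\ forall a, (val (hd' a)).1 = hd a,
      forall a, (val (tl' a)).1 = tl a
    & forall a b, hd a = tl b -> (hd' a = tl' b <-> ~~ Z b a)].

End Gentle.

Section Semilinear.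
Variables (K : unitRingType) (V A : finType) (hd tl : A -> V)
          (sigma : A -> {rmorphism K -> K}) (Z : rel A).

Definition sl_relations (R : pzRingType) (iota : {rmorphism K -> R})
    (e : V -> R) (x : A -> R) : Prop :=
  (\sum_(v : V) e v = 1) /\
  (forall v, e v * e v = e v) /\
  (forall u v, u != v -> e u * e v = 0) /\
  (forall v (l : K), e v * iota l = iota l * e v) /\
  (forall a, e (hd a) * x a = x a /\ x a * e (tl a) = x a) /\
  (forall a (l : K), x a * iota l = iota (sigma a l) * x a) /\
  (forall b a, Z b a -> x b * x a = 0).

(** (R, iota, e, x) is the K-ring generated by the e_v and the arrows subject
    to the relations above, i.e. it has the universal property of the
    presented ring K_sigma Q / <Z> (among rings under K). *)
Definition sl_presents (R : pzRingType) (iota : {rmorphism K -> R})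
    (e : V -> R) (x : A -> R) : Prop :=
  sl_relations iota e x /\
  forall (S : pzRingType) (iota' : {rmorphism K -> S}) (e' : V -> S) (x' : A -> S),
    sl_relations iota' e' x' ->
    (exists phi : {rmorphism R -> S},
        [/\ forall l, phi (iota l) = iota' l, forall v, phi (e v) = e' v
          & forall a, phi (x a) = x' a]) /\
    (forall phi psi : {rmorphism R -> S},
        (forall l, phi (iota l) = iota' l) -> (forall v, phi (e v) = e' v) ->
        (forall a, phi (x a) = x' a) ->
        (forall l, psi (iota l) = iota' l) -> (forall v, psi (e v) = e' v) ->
        (forall a, psi (x a) = x' a) ->
        phi =1 psi).

End Semilinear.

Arguments zembyk_excision {V A} hd tl Z hd' tl'.

(* Delta is induced by e_v |-> sum of e_c over the lifts c of v, and a |-> a': the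
   relations of Lambda hold in Gamma because ba in Z forces t(b') <> h(a') in Q'.
   For injectivity, let Gamma act on K-valued coefficient functions on the paths of
   Q' (e_c projects onto the paths ending at c, an arrow a' appends itself and
   twists the coefficients by sigma_a), and evaluate such a function in Lambda by
   sending a nontrivial path of Q' to the product of its arrows in Lambda and
   the trivial paths at v(flat), v(sharp) to e_v and 0.  On functions taking equal values at
   the two trivial paths over each vertex, evaluation turns the action of Delta(y)
   into left multiplication by y: this is checked on the generators and spreads
   to all of Lambda by the universal property.  The sum of all trivial paths
   evaluates to 1, so y is recovered from Delta(y). *)

From HB Require Import structures.
From mathcomp Require Import all_boot all_order all_algebra.
From mathcomp Require Import boolp.
Set Implicit Arguments. Unset Strict Implicit. Unset Printing Implicit Defensive.
Import GRing.Theory.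
Local Open Scope ring_scope.

Section AdditiveEndomorphisms.
Variable M : zmodType.

Record add_endo := AddEndo {
  add_endo_fun :> M -> M;
  _ : forall m n, add_endo_fun (m + n) = add_endo_fun m + add_endo_fun n }.

HB.instance Definition _ := gen_eqMixin add_endo.
HB.instance Definition _ := gen_choiceMixin add_endo.

Lemma add_endoP (f g : add_endo) : f =1 g -> f = g.
Proof.
case: f g => f fD [g gD] /= /funext fg; subst g.
by congr AddEndo; apply: Prop_irrelevance.
Qed.

Lemma add_endoD (f : add_endo) m n : f (m + n) = f m + f n.
Proof. by case: f. Qed.

Fact add_endo0_subproof (m n : M) : (0 : M) = 0 + 0. Proof. by rewrite addr0. Qed.
Fact add_endoN_subproof (f : add_endo) m n : - f (m + n) = - f m + - f n.
Proof. by rewrite add_endoD opprD. Qed.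
Fact add_endo_add_subproof (f g : add_endo) m n :
  f (m + n) + g (m + n) = (f m + g m) + (f n + g n).
Proof. by rewrite !add_endoD addrACA. Qed.
Fact add_endo1_subproof m n : (m + n : M) = m + n. Proof. by []. Qed.
Fact add_endo_mul_subproof (f g : add_endo) m n : f (g (m + n)) = f (g m) + f (g n).
Proof. by rewrite !add_endoD. Qed.

Definition add_endo0 := AddEndo add_endo0_subproof.
Definition add_endo_opp f := AddEndo (add_endoN_subproof f).
Definition add_endo_add f g := AddEndo (add_endo_add_subproof f g).
Definition add_endo1 := AddEndo add_endo1_subproof.
Definition add_endo_mul f g := AddEndo (add_endo_mul_subproof f g).

Fact add_endo_addA : associative add_endo_add.
Proof. by move=> f g h; apply: add_endoP => m /=; rewrite addrA. Qed.
Fact add_endo_addC : commutative add_endo_add.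
Proof. by move=> f g; apply: add_endoP => m /=; rewrite addrC. Qed.
Fact add_endo_add0 : left_id add_endo0 add_endo_add.
Proof. by move=> f; apply: add_endoP => m /=; rewrite add0r. Qed.
Fact add_endo_addN : left_inverse add_endo0 add_endo_opp add_endo_add.
Proof. by move=> f; apply: add_endoP => m /=; rewrite addNr. Qed.
HB.instance Definition _ :=
  GRing.isZmodule.Build add_endo add_endo_addA add_endo_addC add_endo_add0 add_endo_addN.

Fact add_endo_mulA : associative add_endo_mul. Proof. by move=> f g h; apply: add_endoP. Qed.
Fact add_endo_mul1 : left_id add_endo1 add_endo_mul. Proof. by move=> f; apply: add_endoP. Qed.
Fact add_endo_mulr1 : right_id add_endo1 add_endo_mul. Proof. by move=> f; apply: add_endoP. Qed.
Fact add_endo_mulDl : left_distributive add_endo_mul add_endo_add.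
Proof. by move=> f g h; apply: add_endoP. Qed.
Fact add_endo_mulDr : right_distributive add_endo_mul add_endo_add.
Proof. by move=> f g h; apply: add_endoP => m /=; rewrite add_endoD. Qed.
HB.instance Definition _ := GRing.Zmodule_isPzRing.Build add_endo
  add_endo_mulA add_endo_mul1 add_endo_mulr1 add_endo_mulDl add_endo_mulDr.

Lemma add_endo_sumE (I : Type) (r : seq I) (P : pred I) (F : I -> add_endo) m :
  (\sum_(i <- r | P i) F i) m = \sum_(i <- r | P i) F i m.
Proof. by elim/big_rec2: _ => // i y f _ <-. Qed.

End AdditiveEndomorphisms.

Section PresentedRingInduction.
Variables (K : unitRingType) (V A : finType) (hd tl : A -> V)
  (sigma : A -> {rmorphism K -> K}) (Z : rel A)
  (R : pzRingType) (iota : {rmorphism K -> R}) (e : V -> R) (x : A -> R).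
Hypothesis presR : sl_presents hd tl sigma Z iota e x.
Variable S : {pred R}.
Hypotheses (S_subring : subring_closed S) (S_iota : forall l, iota l \in S)
  (S_e : forall v, e v \in S) (S_x : forall a, x a \in S).

Local Notation T := {r : R | r \in S}.
HB.instance Definition _ := GRing.SubChoice_isSubPzRing.Build R S T S_subring.

Let iotaT l : T := Sub (iota l) (S_iota l).
Fact iotaT_is_zmod_morphism : zmod_morphism iotaT.
Proof. by move=> l k; apply: val_inj; rewrite /= rmorphB. Qed.
Fact iotaT_is_monoid_morphism : monoid_morphism iotaT.
Proof.
by split=> [|l k]; apply: val_inj; rewrite /= ?rmorph1 ?rmorphM.
Qed.
HB.instance Definition _ := GRing.isZmodMorphism.Build K T iotaT iotaT_is_zmod_morphism.
HB.instance Definition _ := GRing.isMonoidMorphism.Build K T iotaT iotaT_is_monoid_morphism.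

Lemma sl_presents_subring_ind r : r \in S.
Proof.
have [[sum_e [idem_e [orth_e [e_iota [e_x [x_iota x_Z]]]]]] univR] := presR.
pose eT v : T := Sub (e v) (S_e v); pose xT a : T := Sub (x a) (S_x a).
have relT : sl_relations hd tl sigma Z iotaT eT xT.
  split; first by apply: val_inj; rewrite rmorph_sum rmorph1.
  split; first by move=> v; apply: val_inj; rewrite rmorphM /= idem_e.
  split; first by move=> u v uv; apply: val_inj; rewrite rmorphM /= orth_e.
  split; first by move=> v l; apply: val_inj; rewrite !rmorphM /= e_iota.
  split; first by move=> a; split; apply: val_inj; rewrite rmorphM /= ?(e_x a).1 ?(e_x a).2.
  split; first by move=> a l; apply: val_inj; rewrite !rmorphM /= x_iota.
  by move=> b a Zba; apply: val_inj; rewrite rmorphM /= x_Z.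
have [[phi [phi_iota phi_e phi_x]] _] := univR _ _ _ _ relT.
have [_ uniqR] := univR _ _ _ _ presR.1.
have phiK : val \o phi =1 id.
  by apply: (uniqR (val \o phi) idfun) => //= [l|v|a]; rewrite ?phi_iota ?phi_e ?phi_x.
by rewrite -(phiK r); apply: valP.
Qed.
End PresentedRingInduction.

Lemma big_if_eq (R : Type) (idx : R) (op : Monoid.law idx)
    (I : finType) (P : pred I) (i : I) (F : I -> R) :
  \big[op/idx]_(j | P j) (if i == j then F j else idx) = if P i then F i else idx.
Proof.
rewrite -big_mkcondr; case: ifP => Pi; [apply: big_pred1 | apply: big_pred0] => j /=;
  by rewrite eq_sym; case: eqP => [->|]; rewrite ?Pi ?andbF.
Qed.

Section RelationsTheory.
Variables (K : unitRingType) (V A : finType) (hd tl : A -> V)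
  (sigma : A -> {rmorphism K -> K}) (Z : rel A)
  (R : pzRingType) (iota : {rmorphism K -> R}) (e : V -> R) (x : A -> R).
Hypothesis relR : sl_relations hd tl sigma Z iota e x.

Lemma sl_sum_e : \sum_v e v = 1.
Proof. by case: relR. Qed.

Lemma sl_e_iota v l : e v * iota l = iota l * e v.
Proof. by case: relR => _ [_ [_ [? _]]]. Qed.

Lemma sl_hd_x a : e (hd a) * x a = x a.
Proof. by case: relR => _ [_ [_ [_ [/(_ a) []]]]]. Qed.

Lemma sl_x_tl a : x a * e (tl a) = x a.
Proof. by case: relR => _ [_ [_ [_ [/(_ a) []]]]]. Qed.

Lemma sl_x_iota a l : x a * iota l = iota (sigma a l) * x a.
Proof. by case: relR => _ [_ [_ [_ [_ [? _]]]]]. Qed.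

Lemma sl_xx_rel b a : Z b a -> x b * x a = 0.
Proof. by case: relR => _ [_ [_ [_ [_ [_ ?]]]]]; auto. Qed.

Lemma sl_ee u v : e u * e v = if u == v then e v else 0.
Proof.
case: relR => _ [idem [orth _]].
by case: eqP => [->|/eqP]; [apply: idem | apply: orth].
Qed.

Lemma sl_ex v a : e v * x a = if hd a == v then x a else 0.
Proof. by rewrite -sl_hd_x mulrA sl_ee eq_sym; case: eqP; rewrite ?mul0r. Qed.

Lemma sl_xe a v : x a * e v = if tl a == v then x a else 0.
Proof. by rewrite -sl_x_tl -mulrA sl_ee; case: eqP => [->|]; rewrite ?mulr0. Qed.

Lemma sl_xx_neq b a : tl b != hd a -> x b * x a = 0.
Proof.
move=> tl_hd; rewrite -sl_x_tl -(sl_hd_x a) mulrA -(mulrA (x b)) sl_ee.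
by rewrite (negbTE tl_hd) mulr0 mul0r.
Qed.

Lemma sl_e_sum u (P : pred V) :
  e u * (\sum_(v | P v) e v) = if P u then e u else 0.
Proof.
by rewrite mulr_sumr (eq_bigr _ (fun v _ => sl_ee u v)) big_if_eq.
Qed.

Lemma sl_sum_e_mul (P Q : pred V) :
  (\sum_(v | P v) e v) * (\sum_(v | Q v) e v) = \sum_(v | P v && Q v) e v.
Proof. by rewrite mulr_suml big_mkcondr; apply: eq_bigr => u _; rewrite sl_e_sum. Qed.

Lemma sl_sum_e_x (P : pred V) a :
  (\sum_(v | P v) e v) * x a = if P (hd a) then x a else 0.
Proof.
by rewrite mulr_suml (eq_bigr _ (fun v _ => sl_ex v a)) big_if_eq.
Qed.

Lemma sl_x_sum_e a (P : pred V) :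
  x a * (\sum_(v | P v) e v) = if P (tl a) then x a else 0.
Proof.
by rewrite mulr_sumr (eq_bigr _ (fun v _ => sl_xe a v)) big_if_eq.
Qed.

End RelationsTheory.

Section ExcisionRelations.
Variables (K : unitRingType) (Q0 Q1 : finType) (hd tl : Q1 -> Q0) (Z : rel Q1)
  (sigma : Q1 -> {rmorphism K -> K}).
Local Notation C := (cut_vertex hd tl Z).
Variables (hd' tl' : Q1 -> C).
Hypotheses (Z_composable : forall b a, Z b a -> hd a = tl b)
  (cut : zembyk_excision hd tl Z hd' tl').

Definition lifts (v : Q0) : pred C := fun c => (val c).1 == v.

Lemma lifts_hd a : lifts (hd a) (hd' a).
Proof. by case: cut => hd'E _ _; rewrite /lifts hd'E. Qed.

Lemma lifts_tl a : lifts (tl a) (tl' a).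
Proof. by case: cut => _ tl'E _; rewrite /lifts tl'E. Qed.

Lemma excision_relations (R : pzRingType) (iota : {rmorphism K -> R})
    (e : C -> R) (x : Q1 -> R) :
  sl_relations hd' tl' sigma (fun _ _ => false) iota e x ->
  sl_relations hd tl sigma Z iota (fun v => \sum_(c | lifts v c) e c) x.
Proof.
move=> relR; have [_ _ cut_rel] := cut.
split.
  by rewrite -(sl_sum_e relR) (partition_big (fun c : C => (val c).1) xpredT).
split; first by move=> v; rewrite (sl_sum_e_mul relR) (eq_bigl _ _ (fun c => andbb _)).
split.
  move=> u v uv; rewrite (sl_sum_e_mul relR) big_pred0 // => c.
  by apply/negbTE/andP => -[/eqP cu /eqP cv]; rewrite -cu -cv eqxx in uv.
split.
  by move=> v l; rewrite mulr_suml mulr_sumr; apply: eq_bigr => c _; rewrite (sl_e_iota relR).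
split.
  by move=> a; rewrite (sl_sum_e_x relR) (sl_x_sum_e relR) lifts_hd lifts_tl.
split; first exact: (sl_x_iota relR).
move=> b a Zba; apply: (sl_xx_neq relR).
by apply/eqP => /esym /(cut_rel _ _ (Z_composable Zba)); rewrite Zba.
Qed.

End ExcisionRelations.

Section CutPathModule.
Variables (K : unitRingType) (Q0 Q1 : finType) (hd tl : Q1 -> Q0) (Z : rel Q1)
  (sigma : Q1 -> {rmorphism K -> K}).
Local Notation C := (cut_vertex hd tl Z).
Variables (hd' tl' : Q1 -> C).
Hypothesis cut : zembyk_excision hd tl Z hd' tl'.
Variable s : seq (seq Q1).
Hypothesis s_adm : forall p, admissible_path hd tl Z p -> p \in s.

Fixpoint cut_path (c : C) (q : seq Q1) : bool :=
  if q is a :: q' then (tl' a == c) && cut_path (hd' a) q' else true.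

Lemma cut_path_rcons c q a :
  cut_path c (rcons q a) = cut_path c q && (tl' a == last c (map hd' q)).
Proof. by elim: q c => [|b q IHq] c /=; rewrite ?andbT // IHq andbA. Qed.

Lemma cut_path_admissible c q : cut_path c q -> admissible_path hd tl Z q.
Proof.
have [hd'E tl'E cut_rel] := cut.
case: q c => [|a q] c //= /andP[_]; elim: q a => [|b q IHq] a //= /andP[/eqP ab bq].
have hd_tl : hd a = tl b by rewrite -hd'E -tl'E ab.
by rewrite (IHq b bq) andbT hd_tl eqxx; apply/(cut_rel _ _ hd_tl).
Qed.

Definition path_index := (C * seq_sub ([::] :: s))%type.
Definition nil_path : seq_sub ([::] :: s) := Sub [::] (mem_head _ _).
Lemma nil_pathE q : (q == nil_path) = (val q == [::]).
Proof. by rewrite -val_eqE. Qed.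

Definition path_end (i : path_index) : C := last i.1 (map hd' (val i.2)).

Definition extend (i : path_index) (a : Q1) : option path_index :=
  if cut_path i.1 (rcons (val i.2) a)
  then omap (pair i.1) (insub (rcons (val i.2) a)) else None.

Lemma extend_Some i a j : extend i a = Some j ->
  [/\ j.1 = i.1, val j.2 = rcons (val i.2) a & cut_path i.1 (rcons (val i.2) a)].
Proof. by rewrite /extend; case: ifP => // ?; case: insubP => //= u _ <- [<-]. Qed.

Lemma extend_hd i a j : extend i a = Some j -> path_end j = hd' a.
Proof. by case/extend_Some => j1 j2 _; rewrite /path_end j2 j1 map_rcons last_rcons. Qed.

Lemma extend_tl i a j : extend i a = Some j -> path_end i = tl' a.
Proof. by case/extend_Some => _ _; rewrite cut_path_rcons => /andP[_ /eqP]. Qed.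

Lemma extend_None i a : ~~ cut_path i.1 (rcons (val i.2) a) -> extend i a = None.
Proof. by rewrite /extend => /negbTE->. Qed.

Lemma extendP i a : cut_path i.1 (rcons (val i.2) a) ->
  exists2 u, val u = rcons (val i.2) a & extend i a = Some (i.1, u).
Proof.
move=> cut_ia; have s_ia : rcons (val i.2) a \in [::] :: s.
  by rewrite inE s_adm ?orbT //; apply: cut_path_admissible cut_ia.
by exists (SeqSub s_ia); rewrite // /extend cut_ia insubT.
Qed.

Local Notation coeffs := {ffun path_index -> K}.

Fact scale_op_subproof (l : K) (m n : coeffs) :
  [ffun i => l * (m + n) i] = [ffun i => l * m i] + [ffun i => l * n i].
Proof. by apply/ffunP => i; rewrite !ffunE mulrDr. Qed.
Definition scale_op l : add_endo coeffs := AddEndo (scale_op_subproof l).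

Fact end_proj_subproof c (m n : coeffs) :
  [ffun j => if path_end j == c then (m + n) j else 0] =
  [ffun j => if path_end j == c then m j else 0] +
  [ffun j => if path_end j == c then n j else 0].
Proof. by apply/ffunP => j; rewrite !ffunE; case: ifP; rewrite ?addr0. Qed.
Definition end_proj c : add_endo coeffs := AddEndo (end_proj_subproof c).

Fact arrow_op_subproof a (m n : coeffs) :
  [ffun j => \sum_i (if extend i a == Some j then sigma a ((m + n) i) else 0)] =
  [ffun j => \sum_i (if extend i a == Some j then sigma a (m i) else 0)] +
  [ffun j => \sum_i (if extend i a == Some j then sigma a (n i) else 0)].
Proof.
apply/ffunP => j; rewrite !ffunE -big_split /=; apply: eq_bigr => i _.
by rewrite ffunE rmorphD; case: ifP; rewrite ?addr0.
Qed.
Definition arrow_op a : add_endo coeffs := AddEndo (arrow_op_subproof a).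

Fact scale_op_is_zmod_morphism : zmod_morphism scale_op.
Proof. by move=> l k; apply: add_endoP => m; apply/ffunP => i; rewrite /= !ffunE mulrBl. Qed.
Fact scale_op_is_monoid_morphism : monoid_morphism scale_op.
Proof.
by split=> [|l k]; apply: add_endoP => m; apply/ffunP => i; rewrite /= !ffunE ?mul1r ?mulrA.
Qed.
HB.instance Definition _ :=
  GRing.isZmodMorphism.Build K (add_endo coeffs) scale_op scale_op_is_zmod_morphism.
HB.instance Definition _ :=
  GRing.isMonoidMorphism.Build K (add_endo coeffs) scale_op scale_op_is_monoid_morphism.

Lemma path_module_relations :
  sl_relations hd' tl' sigma (fun _ _ => false) scale_op end_proj arrow_op.
Proof.
split.
  apply: add_endoP => m; apply/ffunP => j; rewrite add_endo_sumE sum_ffunE.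
  by rewrite (eq_bigr _ (fun c _ => ffunE _ _)) big_if_eq.
split.
  by move=> c; apply: add_endoP => m; apply/ffunP => j; rewrite /= !ffunE; case: eqP.
split.
  move=> u v uv; apply: add_endoP => m; apply/ffunP => j; rewrite /= !ffunE.
  by case: eqP => // ->; rewrite (negbTE uv).
split.
  move=> v l; apply: add_endoP => m; apply/ffunP => j; rewrite /= !ffunE.
  by case: ifP; rewrite ?mulr0.
split.
  move=> a; split; apply: add_endoP => m; apply/ffunP => j; rewrite /= !ffunE.
    case: eqP => // hd'j; symmetry; apply: big1 => i _.
    by case: eqP => // /extend_hd.
  by apply: eq_bigr => i _; case: eqP => // /extend_tl tl'i; rewrite ffunE tl'i eqxx.
split => // a l; apply: add_endoP => m; apply/ffunP => j; rewrite /= !ffunE mulr_sumr.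
by apply: eq_bigr => i _; rewrite ffunE; case: ifP; rewrite ?mulr0 // rmorphM.
Qed.

Section PathEvaluation.
Variables (Lam : pzRingType) (iotaL : {rmorphism K -> Lam}) (eL : Q0 -> Lam) (xL : Q1 -> Lam).
Hypothesis relL : sl_relations hd tl sigma Z iotaL eL xL.

Definition lam_path (q : seq Q1) : Lam := \prod_(a <- rev q) xL a.

Lemma lam_path_rcons q a : lam_path (rcons q a) = xL a * lam_path q.
Proof. by rewrite /lam_path rev_rcons big_cons. Qed.

Definition path_value (i : path_index) : Lam :=
  if ~~ cut_path i.1 (val i.2) then 0 else
  if val i.2 == [::] then (if (val i.1).2 then 0 else eL (val i.1).1)
  else lam_path (val i.2).

Definition path_eval (m : coeffs) : Lam := \sum_i iotaL (m i) * path_value i.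

Definition balanced (m : coeffs) : Prop :=
  forall c c' : C, (val c).1 = (val c').1 -> m (c, nil_path) = m (c', nil_path).

Definition flat (v : Q0) : C := exist _ (v, false) isT.

Lemma sum_path_index (F : path_index -> Lam) :
  \sum_i F i = \sum_c (F (c, nil_path) + \sum_(q | q != nil_path) F (c, q)).
Proof.
rewrite (eq_bigr (fun i => F (i.1, i.2))) => [|[] //].
rewrite -(pair_bigA _ (fun c q => F (c, q))).
by apply: eq_bigr => c _; rewrite (bigD1 nil_path).
Qed.

Lemma path_evalB m n : path_eval (m - n) = path_eval m - path_eval n.
Proof.
by rewrite /path_eval -sumrB; apply: eq_bigr => i _; rewrite !ffunE rmorphB mulrBl.
Qed.

Lemma sl_xx_excised b a : tl' b != hd' a -> xL b * xL a = 0.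
Proof.
have [_ _ cut_rel] := cut; move=> tl'b_hd'a.
have [hd_tl|hd_tl] := eqVneq (hd a) (tl b); last by apply: (sl_xx_neq relL); rewrite eq_sym.
apply: (sl_xx_rel relL); apply: contraNT tl'b_hd'a => /(cut_rel _ _ hd_tl) ->.
exact: eqxx.
Qed.

Lemma e_path_value v j :
  eL v * path_value j = if lifts v (path_end j) then path_value j else 0.
Proof.
have [hd'E _ _] := cut.
case: j => c q; rewrite /path_value /path_end /=.
case: (cut_path c (val q)) => /=; last by rewrite mulr0 if_same.
case/lastP: (val q) => [|q' b] /=.
  by case: ifP => _; rewrite ?mulr0 ?if_same // (sl_ee relL) eq_sym.
have -> : (rcons q' b == [::]) = false by case: q'.
rewrite lam_path_rcons mulrA (sl_ex relL) map_rcons last_rcons /lifts hd'E.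
by case: ifP; rewrite ?mul0r.
Qed.

Lemma path_value_extend a i : val i.2 != [::] ->
  oapp path_value 0 (extend i a) = xL a * path_value i.
Proof.
case: i => c [q q_s] /= q_nil; rewrite {2}/path_value /= (negbTE q_nil).
have [cut_q|ncut_q] := boolP (cut_path c q); last first.
  by rewrite extend_None ?mulr0 //= cut_path_rcons (negbTE ncut_q).
have [tl'a|tl'a] := eqVneq (tl' a) (last c (map hd' q)).
  have cut_qa : cut_path c (rcons q a) by rewrite cut_path_rcons cut_q tl'a eqxx.
  have [u u_qa ->] := @extendP (c, SeqSub q_s) a cut_qa.
  rewrite /path_value /= u_qa cut_qa lam_path_rcons /=.
  by have -> : (rcons q a == [::]) = false by case: (q).
rewrite extend_None /=; last by rewrite cut_path_rcons cut_q (negbTE tl'a).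
case/lastP: q q_s q_nil cut_q tl'a => [//|q' b] _ _ _.
by rewrite map_rcons last_rcons lam_path_rcons mulrA => /sl_xx_excised ->; rewrite mul0r.
Qed.

Lemma eq_flat v c : (flat v == c) = lifts v c && ~~ (val c).2.
Proof. by case: c => -[u [|]] ok; rewrite -val_eqE /= xpair_eqE ?andbF ?andbT // eq_sym. Qed.

Lemma lam_path1 a : lam_path [:: a] = xL a.
Proof. by rewrite (lam_path_rcons [::]) /lam_path big_nil mulr1. Qed.

Lemma path_value_extend_nil a c :
  oapp path_value 0 (extend (c, nil_path) a) = if tl' a == c then xL a else 0.
Proof.
have [<-|tl'a_c] := eqVneq (tl' a) c; last by rewrite extend_None //= (negbTE tl'a_c).
have cut_a : cut_path (tl' a) (rcons (val nil_path) a) by rewrite /= eqxx.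
have [u u_a ->] := @extendP (tl' a, nil_path) a cut_a.
by rewrite /path_value /= u_a /= eqxx lam_path1.
Qed.

Lemma x_path_value_nil a c :
  xL a * path_value (c, nil_path) = if flat (tl a) == c then xL a else 0.
Proof.
rewrite /path_value /= eq_flat; case: ifP => [c_sharp|_]; first by rewrite mulr0 andbF.
by rewrite (sl_xe relL) /lifts eq_sym andbT.
Qed.

Lemma path_eval_arrow_op a m : path_eval (arrow_op a m) =
  \sum_i iotaL (sigma a (m i)) * oapp path_value 0 (extend i a).
Proof.
rewrite /path_eval (eq_bigr (fun j => \sum_i
  (if extend i a == Some j then iotaL (sigma a (m i)) * path_value j else 0))).
  rewrite exchange_big; apply: eq_bigr => i _.
  case: (extend i a) => [j|] /=; last by rewrite mulr0 big1.
  by under eq_bigr do rewrite (inj_eq Some_inj); rewrite big_if_eq.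
move=> j _; rewrite ffunE rmorph_sum mulr_suml; apply: eq_bigr => i _.
by case: ifP; rewrite ?rmorph0 ?mul0r.
Qed.

Lemma arrow_op_nil a m c : arrow_op a m (c, nil_path) = 0.
Proof.
rewrite ffunE; apply: big1 => i _; case: eqP => // /extend_Some[_ /= nil_rcons _].
by case: (val i.2) nil_rcons.
Qed.

Lemma sum_end_proj v m j : (\sum_(c | lifts v c) end_proj c m) j =
  if lifts v (path_end j) then m j else 0.
Proof. by rewrite sum_ffunE (eq_bigr _ (fun c _ => ffunE _ _)) big_if_eq. Qed.

Definition trivial_paths : coeffs := [ffun i => (val i.2 == [::])%:R].

Lemma balanced_trivial_paths : balanced trivial_paths.
Proof. by move=> c c' _; rewrite !ffunE. Qed.

Lemma path_eval_trivial_paths : path_eval trivial_paths = 1.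
Proof.
rewrite /path_eval sum_path_index -(sl_sum_e relL).
rewrite (partition_big (fun c : C => (val c).1) xpredT) //=; apply: eq_bigr => v _.
rewrite (eq_bigr (fun c => if flat v == c then eL v else 0)) => [|c vc].
  by rewrite big_if_eq /= eqxx.
rewrite big1 => [|q nil_q]; last first.
  by rewrite ffunE -[val q == _]nil_pathE (negbTE nil_q) rmorph0 mul0r.
rewrite ffunE /= rmorph1 mul1r addr0 /path_value eq_flat /lifts /= vc (eqP vc).
by case: ifP.
Qed.

Section Intertwining.
Hypothesis presL : sl_presents hd tl sigma Z iotaL eL xL.
Variable act : {rmorphism Lam -> add_endo coeffs}.
Hypotheses (act_iota : forall l, act (iotaL l) = scale_op l)
  (act_e : forall v, act (eL v) = \sum_(c | lifts v c) end_proj c)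
  (act_x : forall a, act (xL a) = arrow_op a).

Definition intertwines (y : Lam) : Prop :=
  forall m, balanced m -> balanced (act y m) /\ path_eval (act y m) = y * path_eval m.

Lemma intertwines_subring : subring_closed [pred y | `[< intertwines y >]].
Proof.
split=> [|y z|y z] /=.
- by apply/asboolP => m bal_m; rewrite rmorph1 mul1r.
- move=> /asboolP y_int /asboolP z_int; apply/asboolP => m bal_m.
  have [bal_y eval_y] := y_int m bal_m; have [bal_z eval_z] := z_int m bal_m.
  rewrite rmorphB; split; last by rewrite path_evalB eval_y eval_z mulrBl.
  by move=> c c' cc'; rewrite !ffunE (bal_y c c' cc') (bal_z c c' cc').
- move=> /asboolP y_int /asboolP z_int; apply/asboolP => m bal_m.
  have [bal_z eval_z] := z_int m bal_m; have [bal_yz eval_yz] := y_int _ bal_z.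
  by rewrite rmorphM; split => //; rewrite eval_yz eval_z mulrA.
Qed.

Lemma intertwines_iota l : intertwines (iotaL l).
Proof.
move=> m bal_m; rewrite act_iota; split.
  by move=> c c' cc'; rewrite !ffunE (bal_m c c' cc').
by rewrite /path_eval mulr_sumr; apply: eq_bigr => i _; rewrite ffunE rmorphM mulrA.
Qed.

Lemma intertwines_e v : intertwines (eL v).
Proof.
move=> m bal_m; rewrite act_e add_endo_sumE; split.
  by move=> c c' cc'; rewrite !sum_end_proj /path_end /lifts /= cc' (bal_m c c' cc').
rewrite /path_eval mulr_sumr; apply: eq_bigr => j _.
rewrite sum_end_proj mulrA (sl_e_iota relL) -mulrA e_path_value.
by case: (lifts _ _); rewrite ?rmorph0 ?mul0r ?mulr0.
Qed.

Lemma intertwines_x a : intertwines (xL a).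
Proof.
move=> m bal_m; rewrite act_x; split; first by move=> c c' _; rewrite !arrow_op_nil.
rewrite path_eval_arrow_op /path_eval mulr_sumr.
under [RHS]eq_bigr => i _ do rewrite mulrA (sl_x_iota relL) -mulrA.
rewrite !sum_path_index !big_split /=; congr (_ + _); last first.
  apply: eq_bigr => c _; apply: eq_bigr => q nil_q.
  by rewrite path_value_extend // -nil_pathE.
under eq_bigr do rewrite path_value_extend_nil (fun_if (GRing.mul _)) mulr0.
under [RHS]eq_bigr do rewrite x_path_value_nil (fun_if (GRing.mul _)) mulr0.
rewrite !big_if_eq; congr (iotaL (sigma a _) * _); apply: bal_m.
by have [_ tl'E _] := cut; rewrite tl'E.
Qed.

Lemma intertwines_all y : intertwines y.
Proof.
apply/asboolP; apply: (sl_presents_subring_ind presL intertwines_subring) => *;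
  apply/asboolP; [exact: intertwines_iota | exact: intertwines_e | exact: intertwines_x].
Qed.

Lemma path_eval_act y : path_eval (act y trivial_paths) = y.
Proof.
by have [_ ->] := intertwines_all y balanced_trivial_paths; rewrite path_eval_trivial_paths mulr1.
Qed.

Lemma act_injective : injective act.
Proof. by move=> y z act_yz; rewrite -(path_eval_act y) act_yz path_eval_act. Qed.

End Intertwining.

End PathEvaluation.

End CutPathModule.

Theorem lemma5p21
  (K : unitRingType) (Kdiv : is_division_ring K)
  (Q0 Q1 : finType) (hd tl : Q1 -> Q0) (Z : rel Q1)
  (HZ : gentle_pair hd tl Z)
  (sigma : Q1 -> {rmorphism K -> K}) (Hsigma : forall a, is_ring_aut (sigma a))
  (* Lambda = K_sigma Q / <Z> *)
  (Lam : pzRingType) (iotaL : {rmorphism K -> Lam}) (eL : Q0 -> Lam) (xL : Q1 -> Lam)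
  (HLam : sl_presents hd tl sigma Z iotaL eL xL)
  (* Q' = Zembyk excision of (Q, Z) *)
  (hd' tl' : Q1 -> cut_vertex hd tl Z) (Hcut : zembyk_excision hd tl Z hd' tl')
  (* Gamma = K_sigma' Q' (no relations), sigma'_{a'} = sigma_a *)
  (Gam : pzRingType) (iotaG : {rmorphism K -> Gam})
  (eG : cut_vertex hd tl Z -> Gam) (xG : Q1 -> Gam)
  (HGam : sl_presents hd' tl' sigma (fun _ _ => false) iotaG eG xG) :
  exists Delta : {rmorphism Lam -> Gam},
    injective Delta /\ (forall l : K, Delta (iotaL l) = iotaG l).
Proof.
have [[Z_composable _ _ _] [s s_adm]] := HZ.
have [[Delta [Delta_iota Delta_e Delta_x]] _] :=
  HLam.2 _ _ _ _ (excision_relations Z_composable Hcut HGam.1).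
have [[rho [rho_iota rho_e rho_x]] _] :=
  HGam.2 _ _ _ _ (path_module_relations sigma hd' tl' s).
exists Delta; split => //; apply: (@inj_compr _ _ _ rho).
apply: (act_injective Hcut s_adm HLam.1 HLam) => [l|v|a] /=.
- by rewrite Delta_iota rho_iota.
- by rewrite Delta_e rmorph_sum; apply: eq_bigr => c _; rewrite rho_e.
- by rewrite Delta_x rho_x.
Qed.
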